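(* Let $G$ be a finite group of order $v=mn$ and $H\le G$ a subgroup of order $n$. Suppose $S'$ is a family of subsets of $G$ which partitions $G\setminus H$ and is both a $(v,s,k,\lambda_1,\mu_1)$-DPDF and a $(v,s,k,\lambda_2,\mu_2)$-EPDF in $G$. Then (i) $n\mid\mu_1$ and $n\mid\mu_2$; (ii) if $\gcd(mn-n,mn-1)=1$, then either (a) $S'$ is an $(mn,s,k,k-1,0)$-DPDF and an $(mn,s,k,mn-2n-k+1,mn-n)$-EPDF, or (b) $S'$ is an $(mn,s,k,k-n,mn-n)$-DPDF and an $(mn,s,k,mn-n-k,0)$-EPDF; (iii) if $n=2$, then either (a) $S'$ is a $(2m,s,k,k-1,0)$-DPDF and a $(2m,s,k,2m-3-k,2m-2)$-EPDF, or (b) $S'$ is a $(2m,s,k,k-2,2m-2)$-DPDF and a $(2m,s,k,2m-2-k,0)$-EPDF.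
   Context: Groups are written multiplicatively with identity $e$; $G^*=G\setminus\{e\}$. For $D\subseteq G$, $\Delta(D)$ is the multiset $\{xy^{-1}: x,y\in D, x\ne y\}$; for $D_1,D_2\subseteq G$, $\Delta(D_1,D_2)$ is the multiset $\{xy^{-1}:x\in D_1,y\in D_2\}$. For a family $A=\{A_1,\dots,A_s\}$ of pairwise disjoint subsets, ${\rm Int}(A)=\bigcup_i\Delta(A_i)$ and ${\rm Ext}(A)=\bigcup_{i\ne j}\Delta(A_i,A_j)$ (multiset unions). For $|G|=v$, a $(v,s,k,\lambda,\mu)$-DPDF is a family of $s$ pairwise disjoint $k$-subsets of $G^*$ with union $S$ such that ${\rm Int}(A)$ contains each element of $S$ exactly $\lambda$ times and each element of $G\setminus(S\cup\{e\})$ exactly $\mu$ times; a $(v,s,k,\lambda,\mu)$-EPDF is defined the same way using ${\rm Ext}(A)$. A family partitions a set $X$ if its members are pairwise disjoint with union $X$. *)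

From mathcomp Require Import all_boot all_order all_algebra all_fingroup.
Set Implicit Arguments. Unset Strict Implicit. Unset Printing Implicit Defensive.
Import GRing.Theory Num.Theory.
Open Scope int_scope.

Section PDF.
Variable gT : finGroupType.

Definition union_fam (s : nat) (A : 'I_s -> {set gT}) : {set gT} :=
  \bigcup_(i < s) A i.

Definition pairwise_disj (s : nat) (A : 'I_s -> {set gT}) : Prop :=
  forall i j : 'I_s, i != j -> [disjoint A i & A j].

(* multiplicity of x in Int(A) = union of Delta(A_i) *)
Definition int_mult (s : nat) (A : 'I_s -> {set gT}) (x : gT) : nat :=
  \sum_(i < s) #|[set p : gT * gT | [&& p.1 \in A i, p.2 \in A i,
                                      p.1 != p.2 & (p.1 * p.2^-1)%g == x]]|.

(* multiplicity of x in Ext(A) = union over i != j of Delta(A_i, A_j) *)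
Definition ext_mult (s : nat) (A : 'I_s -> {set gT}) (x : gT) : nat :=
  \sum_(i < s) \sum_(j < s | j != i)
     #|[set p : gT * gT | [&& p.1 \in A i, p.2 \in A j
                             & (p.1 * p.2^-1)%g == x]]|.

Definition pdf_base (v s k : nat) (A : 'I_s -> {set gT}) : Prop :=
  [/\ #|gT| = v, forall i, #|A i| = k, forall i, (1%g \notin A i)
    & pairwise_disj A].

Definition is_DPDF (v s k : nat) (lam mu : int) (A : 'I_s -> {set gT}) : Prop :=
  pdf_base v k A /\
  (forall x : gT, x \in union_fam A -> Posz (int_mult A x) = lam) /\
  (forall x : gT, x \notin union_fam A -> x != 1%g -> Posz (int_mult A x) = mu).

Definition is_EPDF (v s k : nat) (lam mu : int) (A : 'I_s -> {set gT}) : Prop :=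
  pdf_base v k A /\
  (forall x : gT, x \in union_fam A -> Posz (ext_mult A x) = lam) /\
  (forall x : gT, x \notin union_fam A -> x != 1%g -> Posz (ext_mult A x) = mu).

Definition partitions (s : nat) (A : 'I_s -> {set gT}) (X : {set gT}) : Prop :=
  pairwise_disj A /\ union_fam A = X.

End PDF.

From mathcomp Require Import all_boot all_order all_algebra all_fingroup zify.
Import GRing.Theory Num.Theory.
Set Implicit Arguments. Unset Strict Implicit. Unset Printing Implicit Defensive.

(* For x <> 1 the intra- and inter-block multiplicities of x add up to the
   number of pairs (a, b) in S = G \ H with a b^-1 = x, which is |S| for x in H
   and |S| - |H| otherwise; hence the EPDF parameters are determined by the
   DPDF ones.  Counting all intra-block differences gives
   (n - 1) mu = |S| (k - 1 - lambda).  As n divides |S| = mn - n and is coprime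
   to n - 1, n divides mu.  If |S| is coprime to mn - 1 = |S| + (n - 1), then
   |S| divides mu, and 0 <= mu <= |S| leaves mu = 0 or mu = |S|; for n = 2 this
   coprimality is automatic. *)

Lemma sum_card_fibres (T I : finType) (P : pred T) (f : T -> I) :
  \sum_y #|[set p | P p && (f p == y)]| = #|[set p | P p]|.
Proof.
rewrite -sum1dep_card (partition_big f xpredT) //=.
by apply: eq_bigr => y _; rewrite sum1dep_card.
Qed.

Lemma card_offdiag (T : finType) (A : {set T}) :
  #|[set p : T * T | [&& p.1 \in A, p.2 \in A & p.1 != p.2]]| = #|A| * #|A|.-1.
Proof.
rewrite -sum1dep_card -sum_nat_const.
transitivity (\sum_(a in A) \sum_(b | (b \in A) && (a != b)) 1); first by rewrite pair_big_dep.
apply: eq_bigr => a Aa; rewrite sum1dep_card (cardsD1 a A) Aa /=.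
by apply: eq_card => b; rewrite !inE andbC eq_sym.
Qed.

Lemma dvdn_leq_cases d b : (d %| b)%N -> (b <= d)%N -> b = 0%N \/ b = d.
Proof.
case: b => [|b] d_b b_d; first by left.
by right; apply/eqP; rewrite eqn_leq b_d dvdn_leq.
Qed.

Section DeltaMultiplicity.
Variable gT : finGroupType.
Implicit Types (S T : {set gT}) (x : gT).

Definition delta_mult S T x : nat :=
  #|[set p : gT * gT | [&& p.1 \in S, p.2 \in T & (p.1 * p.2^-1)%g == x]]|.

Lemma delta_multE S T x :
  delta_mult S T x = \sum_(a in S) \sum_(b in T) ((a * b^-1)%g == x).
Proof.
rewrite /delta_mult -sum1dep_card.
transitivity (\sum_(a in S) \sum_(b | (b \in T) && ((a * b^-1)%g == x)) 1);
  first by rewrite pair_big_dep.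
apply: eq_bigr => a _; rewrite big_mkcondr /=.
by apply: eq_bigr => b _; case: eqP.
Qed.

Lemma delta_mult_card S T x : delta_mult S T x = #|[set b in T | (x * b)%g \in S]|.
Proof.
rewrite delta_multE exchange_big -sum1dep_card big_mkcondr /=.
apply: eq_bigr => b _; rewrite big_mkcond (bigD1 (x * b)%g) //= mulgK eqxx.
rewrite big1 ?addn0 => [|a /negbTE nab]; first by case: (_ \in S).
by rewrite (canF_eq (mulgKV b)) nab if_same.
Qed.

Variables (s : nat) (A : 'I_s -> {set gT}).

Lemma card_union_fam : pairwise_disj A -> #|union_fam A| = \sum_i #|A i|.
Proof.
move=> disjA; rewrite -sum1_card partition_disjoint_bigcup //.
by apply: eq_bigr => i _; rewrite sum1_card.
Qed.

Lemma delta_mult_union_fam x : pairwise_disj A ->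
  delta_mult (union_fam A) (union_fam A) x = \sum_i \sum_j delta_mult (A i) (A j) x.
Proof.
move=> disjA; rewrite delta_multE partition_disjoint_bigcup //.
apply: eq_bigr => i _.
under eq_bigr do rewrite partition_disjoint_bigcup //.
by rewrite exchange_big; apply: eq_bigr => j _; rewrite delta_multE.
Qed.

Lemma int_mult_delta x : x != 1%g -> int_mult A x = \sum_i delta_mult (A i) (A i) x.
Proof.
move=> x1; apply: eq_bigr => i _; apply: eq_card => p; rewrite !inE.
case: ((p.1 * p.2^-1)%g =P x) => [px|_]; last by rewrite !andbF.
by rewrite eq_mulgV1 px x1 !andbT.
Qed.

Lemma int_mult1 : int_mult A 1%g = 0%N.
Proof.
apply: big1 => i _; apply: eq_card0 => p; rewrite !inE -eq_mulgV1.
by case: (p.1 =P p.2); rewrite ?andbF.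
Qed.

Lemma int_mult_add_ext_mult x : pairwise_disj A -> x != 1%g ->
  int_mult A x + ext_mult A x = delta_mult (union_fam A) (union_fam A) x.
Proof.
move=> disjA x1; rewrite delta_mult_union_fam // int_mult_delta // -big_split.
by apply: eq_bigr => i _; rewrite [in RHS](bigD1 i).
Qed.

Lemma sum_int_mult : \sum_x int_mult A x = \sum_i #|A i| * #|A i|.-1.
Proof.
rewrite exchange_big; apply: eq_bigr => i _; rewrite -card_offdiag.
rewrite -(sum_card_fibres _ (fun p : gT * gT => (p.1 * p.2^-1)%g)).
by apply: eq_bigr => x _; apply: eq_card => p; rewrite !inE !andbA.
Qed.

End DeltaMultiplicity.

Section SubgroupComplement.
Variables (gT : finGroupType) (H : {group gT}).

Lemma delta_mult_compl_in x : x \in H -> delta_mult (~: H) (~: H) x = #|~: H|.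
Proof.
move=> Hx; rewrite delta_mult_card; apply: eq_card => b.
by rewrite !inE groupMl // andbb.
Qed.

Lemma delta_mult_compl_out x : x \notin H -> delta_mult (~: H) (~: H) x + #|H| = #|~: H|.
Proof.
move=> Hx; have sub_coset : (x^-1 *: H)%g \subset ~: H.
  apply/subsetP => _ /lcosetP[h Hh ->]; rewrite inE.
  by apply: contra Hx; rewrite groupMr // groupV.
rewrite delta_mult_card -(card_lcoset H x^-1%g).
have -> : [set b in ~: H | (x * b)%g \in ~: H] = ~: H :\: (x^-1 *: H)%g.
  by apply/setP => b; rewrite !inE mem_lcoset invgK andbC.
by rewrite cardsDS // subnK ?subset_leq_card.
Qed.

Lemma cardD1_group : #|H| = #|(H^#)%g|.+1.
Proof. by rewrite (cardsD1 1%g) group1. Qed.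

Lemma dvdn_card_compl : (#|H| %| #|~: H|)%N.
Proof.
by rewrite -(dvdn_addr _ (dvdnn #|H|)) cardsC -cardsT cardSg ?subsetT.
Qed.

End SubgroupComplement.

Section PartitionOfSubgroupComplement.
Variables (gT : finGroupType) (H : {group gT}) (s v k : nat) (A : 'I_s -> {set gT}).
Hypothesis partA : partitions A (~: H).
Local Open Scope ring_scope.

Lemma int_mult_add_ext_mult_in x : x \in H -> x != 1%g ->
  (int_mult A x + ext_mult A x = #|~: H|)%N.
Proof.
case: partA => disjA UA Hx x1.
by rewrite int_mult_add_ext_mult // UA delta_mult_compl_in.
Qed.

Lemma int_mult_add_ext_mult_out x : x \notin H ->
  (int_mult A x + ext_mult A x + #|H| = #|~: H|)%N.
Proof.
case: partA => disjA UA Hx; have x1 : x != 1%g by apply: contraNneq Hx => ->.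
by rewrite int_mult_add_ext_mult // UA delta_mult_compl_out.
Qed.

Lemma DPDF_params lam mu lam' mu' :
  (forall x, x \notin H -> lam = lam') -> (forall y, y \in (H^#)%g -> mu = mu') ->
  is_DPDF v k lam mu A -> is_DPDF v k lam' mu' A.
Proof.
case: partA => _ UA lamE muE [base [Dlam Dmu]]; split=> //; rewrite UA; split=> x.
  by rewrite inE => Hx; rewrite -(lamE x Hx) Dlam // UA inE.
by rewrite inE negbK => Hx x1; rewrite -(muE x) ?inE ?x1 // Dmu // UA inE negbK.
Qed.

Lemma EPDF_of_DPDF lam1 mu1 lam2 mu2 :
  lam1 + lam2 = #|~: H|%:Z - #|H|%:Z -> mu1 + mu2 = #|~: H|%:Z ->
  is_DPDF v k lam1 mu1 A -> is_EPDF v k lam2 mu2 A.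
Proof.
case: partA => _ UA lam_sum mu_sum [base [Dlam Dmu]]; split=> //; rewrite UA; split=> x.
  rewrite inE => Hx; have := int_mult_add_ext_mult_out Hx.
  have := Dlam x; rewrite UA inE => /(_ Hx); lia.
rewrite inE negbK => Hx x1; have := int_mult_add_ext_mult_in Hx x1.
have := Dmu x; rewrite UA inE negbK => /(_ Hx x1); lia.
Qed.

Lemma DPDF_EPDF_mu_add lam1 mu1 lam2 mu2 y : y \in (H^#)%g ->
  is_DPDF v k lam1 mu1 A -> is_EPDF v k lam2 mu2 A -> mu1 + mu2 = #|~: H|%:Z.
Proof.
case: partA => _ UA; rewrite !inE => /andP[y1 Hy] [_ [_ Dmu]] [_ [_ Emu]].
have := int_mult_add_ext_mult_in Hy y1.
by rewrite -(Dmu y) -?(Emu y) ?UA ?inE ?negbK //; lia.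
Qed.

Lemma DPDF_param_eq lam mu : is_DPDF v k lam mu A ->
  #|(H^#)%g|%:Z * mu = #|~: H|%:Z * (k%:Z - 1 - lam).
Proof.
case: partA => disjA UA [[_ cardA _ _] [Dlam Dmu]].
have cardC : #|~: H| = (s * k)%N.
  by rewrite -UA card_union_fam // (eq_bigr (fun=> k)) // sum_nat_const card_ord.
have sum_nat : (\sum_x int_mult A x = s * (k * k.-1))%N.
  rewrite sum_int_mult (eq_bigr (fun=> (k * k.-1)%N)) => [|i _]; last by rewrite cardA.
  by rewrite sum_nat_const card_ord.
have sum_int : \sum_x (int_mult A x)%:Z = #|~: H|%:Z * lam + #|(H^#)%g|%:Z * mu.
  rewrite (bigID (mem H)) /= addrC [X in _ + X](bigD1 1%g) ?group1 //= int_mult1 add0r.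
  congr (_ + _).
    rewrite (eq_big (mem (~: H)) (fun=> lam)) => [|x|x]; rewrite ?inE //.
      by rewrite sumr_const -mulr_natl natz.
    by move=> Hx; rewrite Dlam // UA inE.
  rewrite (eq_big (mem (H^#)%g) (fun=> mu)) => [|x|x]; rewrite ?inE 1?andbC //.
    by rewrite sumr_const -mulr_natl natz.
  by case/andP => x1 Hx; rewrite Dmu // UA inE negbK.
have sum_eq : \sum_x (int_mult A x)%:Z = #|~: H|%:Z * (k%:Z - 1).
  under eq_bigr do rewrite -natz.
  rewrite -natr_sum natz sum_nat cardC.
  case: (k) => [|k'] /=; first by rewrite !muln0 mul0r.
  by rewrite -addn1 !PoszM PoszD addrK mulrA.
by rewrite mulrBr -sum_eq sum_int addrC addKr.
Qed.

Lemma DPDF_mu_dvd lam mu : is_DPDF v k lam mu A -> (#|H|%:Z %| mu)%Z.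
Proof.
move=> /DPDF_param_eq eq_mu.
have cop : coprimez #|H|%:Z #|(H^#)%g|%:Z by rewrite coprimezE /= cardD1_group coprimeSn.
rewrite -(Gauss_dvdzr _ cop) eq_mu dvdz_mulr // dvdzE /=.
exact: dvdn_card_compl.
Qed.

Lemma EPDF_mu_dvd lam1 mu1 lam2 mu2 :
  is_DPDF v k lam1 mu1 A -> is_EPDF v k lam2 mu2 A -> (#|H|%:Z %| mu2)%Z.
Proof.
move=> D E; case: (set_0Vmem (H^#)%g) => [H1 | [y Hy]].
  by rewrite cardD1_group H1 cards0 dvd1z.
have -> : mu2 = #|~: H|%:Z - mu1 by rewrite -(DPDF_EPDF_mu_add Hy D E) addrC addKr.
rewrite rpredB ?(DPDF_mu_dvd D) // dvdzE /=.
exact: dvdn_card_compl.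
Qed.

Lemma DPDF_mu_cases lam mu y : coprime #|~: H| #|gT|.-1 -> y \in (H^#)%g ->
  is_DPDF v k lam mu A -> mu = 0 \/ mu = #|~: H|%:Z.
Proof.
move=> cop Hy D; have eq_mu := DPDF_param_eq D.
case: partA D => _ UA [_ [_ Dmu]].
move: Hy; rewrite !inE => /andP[y1 Hy].
have mu_y : mu = int_mult A y by rewrite Dmu // UA inE negbK.
have copz : coprimez #|~: H|%:Z #|(H^#)%g|%:Z.
  by move: cop; rewrite coprimezE /= -(cardsC H) cardD1_group addSn /= addnC /coprime gcdnDl.
have N_dvd : (#|~: H|%:Z %| mu)%Z by rewrite -(Gauss_dvdzr _ copz) eq_mu dvdz_mulr.
rewrite mu_y in N_dvd *.
have le_N : (int_mult A y <= #|~: H|)%N by rewrite -(int_mult_add_ext_mult_in Hy y1) leq_addr.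
by have [->|->] := dvdn_leq_cases (N_dvd : (#|~: H| %| int_mult A y)%N) le_N; [left | right].
Qed.

Lemma DPDF_dichotomy lam mu : coprime #|~: H| #|gT|.-1 -> is_DPDF v k lam mu A ->
  is_DPDF v k (k%:Z - 1) 0 A \/ is_DPDF v k (k%:Z - #|H|%:Z) #|~: H|%:Z A.
Proof.
move=> cop D; have eq_mu := DPDF_param_eq D.
have lamE c x : x \notin H -> #|(H^#)%g|%:Z * mu = #|~: H|%:Z * c -> lam = k%:Z - 1 - c.
  move=> Hx; have N0 : #|~: H|%:Z != 0.
    by rewrite eqz_nat -lt0n card_gt0; apply/set0Pn; exists x; rewrite inE.
  by rewrite eq_mu => /(mulfI N0) <-; rewrite opprB addrC subrK.
case: (set_0Vmem (H^#)%g) => [H1 | [y Hy]].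
  left; apply: DPDF_params D => [x Hx | y]; last by rewrite H1 inE.
  by rewrite (lamE 0 x Hx) ?subr0 // H1 cards0 mulr0 mul0r.
have [mu0 | muN] := DPDF_mu_cases cop Hy D; [left | right];
  apply: DPDF_params D => [x Hx | y' _] //.
  by rewrite (lamE 0 x Hx) ?subr0 // mu0 !mulr0.
rewrite (lamE #|(H^#)%g|%:Z x Hx); last by rewrite muN mulrC.
by rewrite cardD1_group -addn1 PoszD opprD addrA addrAC.
Qed.

End PartitionOfSubgroupComplement.

Local Open Scope ring_scope.

Theorem mainTheorem11 (gT : finGroupType) (H : {group gT}) (m n s k : nat)
  (lam1 mu1 lam2 mu2 : int) (A : 'I_s -> {set gT}) :
  #|gT| = (m * n)%N -> #|H| = n ->
  partitions A (~: (H : {set gT})) ->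
  is_DPDF (m * n) k lam1 mu1 A ->
  is_EPDF (m * n) k lam2 mu2 A ->
  [/\ (n%:Z %| mu1)%Z /\ (n%:Z %| mu2)%Z,
      gcdn (m * n - n) (m * n - 1) = 1%N ->
        (is_DPDF (m * n) k (k%:Z - 1) 0 A /\
         is_EPDF (m * n) k ((m * n)%:Z - 2 * n%:Z - k%:Z + 1)
                           ((m * n)%:Z - n%:Z) A) \/
        (is_DPDF (m * n) k (k%:Z - n%:Z) ((m * n)%:Z - n%:Z) A /\
         is_EPDF (m * n) k ((m * n)%:Z - n%:Z - k%:Z) 0 A)
    & n = 2%N ->
        (is_DPDF (2 * m) k (k%:Z - 1) 0 A /\
         is_EPDF (2 * m) k (2 * m%:Z - 3 - k%:Z) (2 * m%:Z - 2) A) \/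
        (is_DPDF (2 * m) k (k%:Z - 2) (2 * m%:Z - 2) A /\
         is_EPDF (2 * m) k (2 * m%:Z - 2 - k%:Z) 0 A)].
Proof.
move=> cardG cardH partA D E; subst n.
have cardHC : (#|H| + #|~: H| = m * #|H|)%N by rewrite cardsC.
split.
- by split; [exact: DPDF_mu_dvd D | exact: EPDF_mu_dvd D E].
- move=> gcd1; have cop : coprime #|~: H| #|gT|.-1.
    by rewrite /coprime -(addKn #|H| #|~: H|) cardHC cardG -subn1 gcd1.
  have [D' | D'] := DPDF_dichotomy partA cop D; [left | right];
    by split; [apply: (DPDF_params partA _ _ D') | apply: (EPDF_of_DPDF partA _ _ D')];
      move=> *; lia.
- move=> H2; rewrite H2 mulnC in D.
  have cop : coprime #|~: H| #|gT|.-1 by rewrite cardG -cardHC H2 add2n coprimenS.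
  have [D' | D'] := DPDF_dichotomy partA cop D; [left | right];
    by split; [apply: (DPDF_params partA _ _ D') | apply: (EPDF_of_DPDF partA _ _ D')];
      move=> *; lia.
Qed.
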